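(* Let $\mathbf G$ be a simplicial group with Moore complex $\mathbf{NG}$, and suppose $G_3=D_3$, the subgroup of $G_3$ generated by degenerate elements. For $a,b\in NG_1$ put $\omega(a,b)=s_0a\,s_1b\,s_0a^{-1}\,s_1a\,s_1b^{-1}\,s_1a^{-1}\in NG_2$. Let $P_3(\partial_1)\subseteq NG_1$ be the subgroup generated by $\langle x,\langle y,z\rangle\rangle$ and $\langle\langle x,y\rangle,z\rangle$ ($x,y,z\in NG_1$), where $\partial_1=d_1|_{NG_1}:NG_1\to NG_0=G_0$ and $\langle x,y\rangle={}^{\partial_1x}y\,xy^{-1}x^{-1}$ (with $G_0$ acting on $NG_1$ by ${}^{g}y=s_0(g)ys_0(g)^{-1}$), and let $P_3'(\partial_1)\subseteq NG_2/\partial_3NG_3$ be the subgroup generated by the classes of $\omega(\langle x,y\rangle,z)$ and $\omega(x,\langle y,z\rangle)$. Set $M=NG_1/P_3(\partial_1)$, $L=(NG_2/\partial_3NG_3)/P_3'(\partial_1)$, $N=NG_0$, with quotient maps $q_1:NG_1\to M$, $q_2:NG_2/\partial_3NG_3\to L$. Let $\partial:M\to N$ be induced by $d_1$, $\delta:L\to M$ by $d_2$, and let $\omega:C\otimes C\to L$, $C=(M^{cr})^{ab}$, be given by $\omega(\overline{q_1x}\otimes\overline{q_1y})=q_2(\overline{\omega(x,y)})$ for $x,y\in NG_1$. Then these maps are well defined and, with the actions of $N$ induced by conjugation by degeneracies of elements of $G_0$, $C\otimes C\xrightarrow{\omega}L\xrightarrow{\delta}M\xrightarrow{\partial}N$ is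 a quadratic module.
   Context: For a simplicial group $\mathbf G$ with faces $d_i$ and degeneracies $s_i$, the Moore complex is $NG_n=\bigcap_{i=0}^{n-1}\ker d_i^n$ with $\partial_n=d_n^n|_{NG_n}:NG_n\to NG_{n-1}$; $\partial_3NG_3$ is normal in $NG_2$. A pre-crossed module is a homomorphism $\partial:M\to N$ with an $N$-action on $M$ such that $\partial({}^{n}m)=n\partial(m)n^{-1}$; Peiffer commutator $\langle x,y\rangle={}^{\partial x}y\,xy^{-1}x^{-1}$; $P_2(\partial)$ the subgroup generated by Peiffer commutators; a nil(2)-module is a pre-crossed module in which all length-3 Peiffer commutators $\langle\langle x,y\rangle,z\rangle,\langle x,\langle y,z\rangle\rangle$ are trivial; $M^{cr}=M/P_2(\partial)$; $G^{ab}=G/[G,G]$; $C\otimes C$ is the tensor product of abelian groups; $x\mapsto\bar x$ denotes $M\to C$. A quadratic module $(\omega,\delta,\partial)$ is a diagram of homomorphisms $C\otimes C\xrightarrow{\omega}L\xrightarrow{\delta}M\xrightarrow{\partial}N$, with $w:C\otimes C\to M$, such that: QM1 $\partial$ is a nil(2)-module, $C=(M^{cr})^{ab}$, $w(\bar x\otimes\bar y)=\langle x,y\rangle$; QM2 $\partial\delta=1$ and $\delta\omega=w$; QM3 $L$ is an $N$-group, all maps are $N$-equivariant and ${}^{\partial x}a=\omega((\bar x\otimes\overline{\delta a})(\overline{\delta a}\otimes\bar x))a$ for $a\in L,x\in M$; QM4 $\omega(\overline{\delta a}\otimes\overline{\delta b})=[b,a]$ for $a,b\in L$. *)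

From HB Require Import structures.
From mathcomp Require Import all_boot ssralg.

Set Implicit Arguments.
Unset Strict Implicit.
Unset Printing Implicit Defensive.

Local Open Scope group_scope.

Definition gcomm (G : groupType) (x y : G) : G := x * y * x^-1 * y^-1.

Definition is_subgroup (G : groupType) (H : G -> Prop) : Prop :=
  [/\ H 1, (forall x y, H x -> H y -> H (x * y)) & (forall x, H x -> H x^-1)].

Definition gen_by (G : groupType) (S : G -> Prop) (x : G) : Prop :=
  forall H : G -> Prop, is_subgroup H -> (forall y, S y -> H y) -> H x.

Definition commutator_subgroup (G : groupType) : G -> Prop :=
  gen_by (fun z => exists a b : G, z = gcomm a b).

Definition is_hom (G H : groupType) (f : G -> H) : Prop :=
  forall x y, f (x * y) = f x * f y.

(* [q] restricted to the subgroup [H] of [G] is a surjective homomorphism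
   onto [Q] whose kernel is [K]; i.e. [Q] is (a model of) the quotient H/K
   and [q] the quotient map. *)
Definition is_quotient_map (G Q : groupType) (H K : G -> Prop) (q : G -> Q)
  : Prop :=
  [/\ (forall x y, H x -> H y -> q (x * y) = q x * q y),
      (forall m : Q, exists2 x, H x & q x = m) &
      (forall x, H x -> (q x = 1 <-> K x))].

Definition is_abelianization (G : groupType) (C : zmodType) (c : G -> C)
  : Prop :=
  [/\ (forall x y, c (x * y) = (c x + c y)%R),
      (forall m : C, exists x, c x = m) &
      (forall x, c x = 0%R <-> commutator_subgroup x)].

Definition biadditive (C A : zmodType) (f : C -> C -> A) : Prop :=
  (forall a a' b, f (a + a')%R b = (f a b + f a' b)%R) /\
  (forall a b b', f a (b + b')%R = (f a b + f a b')%R).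

Definition additive_map (A B : zmodType) (g : A -> B) : Prop :=
  forall u v, g (u + v)%R = (g u + g v)%R.

Definition is_tensor_square (C T : zmodType) (t : C -> C -> T) : Prop :=
  biadditive t /\
  forall (A : zmodType) (f : C -> C -> A), biadditive f ->
    exists g : T -> A,
      [/\ additive_map g, (forall a b, g (t a b) = f a b) &
          (forall g' : T -> A, additive_map g' ->
             (forall a b, g' (t a b) = f a b) -> forall u, g' u = g u)].

Definition is_group_action (N G : groupType) (act : N -> G -> G) : Prop :=
  [/\ (forall x, act 1 x = x),
      (forall n n' x, act (n * n') x = act n (act n' x)) &
      (forall n x y, act n (x * y) = act n x * act n y)].

Definition is_zmod_action (N : groupType) (A : zmodType) (act : N -> A -> A)
  : Prop :=
  [/\ (forall x, act 1 x = x),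
      (forall n n' x, act (n * n') x = act n (act n' x)) &
      (forall n x y, act n (x + y)%R = (act n x + act n y)%R)].

Definition pre_crossed_module (M N : groupType) (act : N -> M -> M)
  (d : M -> N) : Prop :=
  [/\ is_hom d, is_group_action act &
      (forall n m, d (act n m) = n * d m * n^-1)].

Definition peiffer (M N : groupType) (act : N -> M -> M) (d : M -> N)
  (x y : M) : M := act (d x) y * x * y^-1 * x^-1.

Definition peiffer_subgroup (M N : groupType) (act : N -> M -> M)
  (d : M -> N) : M -> Prop :=
  gen_by (fun z => exists x y, z = peiffer act d x y).

Definition nil2_module (M N : groupType) (act : N -> M -> M) (d : M -> N)
  : Prop :=
  pre_crossed_module act d /\
  forall x y z : M,
    peiffer act d (peiffer act d x y) z = 1 /\
    peiffer act d x (peiffer act d y z) = 1.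

(* The data (Mcr, qcr), (C, cab), (T, t) are models of
   M^cr = M / P_2(d), C = (M^cr)^ab and T = C (x) C; the class of x in C is
   cab (qcr x). *)
Definition quadratic_module
  (L M N : groupType) (actM : N -> M -> M) (actL : N -> L -> L)
  (Mcr : groupType) (qcr : M -> Mcr) (C : zmodType) (cab : Mcr -> C)
  (T : zmodType) (t : C -> C -> T)
  (om : T -> L) (del : L -> M) (d : M -> N) : Prop :=
  let bar := fun x : M => cab (qcr x) in
  [/\ nil2_module actM d,
      is_quotient_map (fun _ => True) (peiffer_subgroup actM d) qcr,
      is_abelianization cab,
      is_tensor_square t &
      exists w : T -> M,
        [/\ (forall u v, w (u + v)%R = w u * w v),
            (forall x y, w (t (bar x) (bar y)) = peiffer actM d x y) &
            (forall u, del (om u) = w u)]] /\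
  [/\ (forall a, d (del a) = 1),
      (forall u v, om (u + v)%R = om u * om v),
      is_hom del,
      [/\ is_group_action actL,
          (forall n a, del (actL n a) = actM n (del a)),
          (exists actT : N -> T -> T,
             [/\ is_zmod_action actT,
                 (forall n x y, actT n (t (bar x) (bar y))
                                = t (bar (actM n x)) (bar (actM n y))) &
                 (forall n u, om (actT n u) = actL n (om u))]) &
          (forall (a : L) (x : M),
             actL (d x) a
             = om (t (bar x) (bar (del a)) + t (bar (del a)) (bar x))%R * a)] &
      (forall a b : L, om (t (bar (del a)) (bar (del b))) = gcomm b a)].

(* face S n i = d_i : G_{n+1} -> G_n (0 <= i <= n+1),
   degen S n i = s_i : G_n -> G_{n+1} (0 <= i <= n). *)
Unset Implicit Arguments.
Record simplicial_group := SimplicialGroup {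
  SG : nat -> groupType;
  face : forall n : nat, nat -> SG n.+1 -> SG n;
  degen : forall n : nat, nat -> SG n -> SG n.+1;
  face_hom : forall n i (x y : SG n.+1),
    face n i (x * y) = face n i x * face n i y;
  degen_hom : forall n i (x y : SG n),
    degen n i (x * y) = degen n i x * degen n i y;
  face_face : forall n i j (x : SG n.+2), i < j -> j <= n.+2 ->
    face n i (face n.+1 j x) = face n j.-1 (face n.+1 i x);
  face_degen_lt : forall n i j (x : SG n.+1), i < j -> j <= n.+1 ->
    face n.+1 i (degen n.+1 j x) = degen n j.-1 (face n i x);
  face_degen_eq : forall n j (x : SG n), j <= n ->
    face n j (degen n j x) = x;
  face_degen_succ : forall n j (x : SG n), j <= n ->
    face n j.+1 (degen n j x) = x;
  face_degen_gt : forall n i j (x : SG n.+1), j.+1 < i -> i <= n.+2 ->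
    face n.+1 i (degen n.+1 j x) = degen n j (face n i.-1 x);
  degen_degen : forall n i j (x : SG n), i <= j -> j <= n ->
    degen n.+1 i (degen n j x) = degen n.+1 j.+1 (degen n i x)
}.
Set Implicit Arguments.

Section Simplicial.
Variable S : simplicial_group.
Local Notation G := (SG S).
Local Notation d := (face S).
Local Notation s := (degen S).

Definition moore (n : nat) : G n -> Prop :=
  match n return G n -> Prop with
  | 0 => fun _ => True
  | m.+1 => fun x => forall i, i <= m -> d m i x = 1
  end.

Definition degenerate3 (x : G 3) : Prop := exists i (y : G 2), i <= 2 /\ x = s 2 i y.
Definition D3 : G 3 -> Prop := gen_by degenerate3.

Definition act1 (g : G 0) (y : G 1) : G 1 := s 0 0 g * y * (s 0 0 g)^-1.

Definition act2 (g : G 0) (y : G 2) : G 2 :=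
  s 1 0 (s 0 0 g) * y * (s 1 0 (s 0 0 g))^-1.

Definition del1 (x : G 1) : G 0 := d 0 1 x.

Definition peiffer1 (x y : G 1) : G 1 := act1 (del1 x) y * x * y^-1 * x^-1.

Definition omega (a b : G 1) : G 2 :=
  s 1 0 a * s 1 1 b * (s 1 0 a)^-1 * s 1 1 a * (s 1 1 b)^-1 * (s 1 1 a)^-1.

Definition P3 : G 1 -> Prop :=
  gen_by (fun z => exists x y w, [/\ moore x, moore y, moore w &
            (z = peiffer1 x (peiffer1 y w) \/ z = peiffer1 (peiffer1 x y) w)]).

Definition bd3 (x : G 2) : Prop := exists2 y : G 3, moore y & d 2 3 y = x.

Definition P3' (Q : groupType) (q : G 2 -> Q) : Q -> Prop :=
  gen_by (fun z => exists x y w, [/\ moore x, moore y, moore w &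
            (z = q (omega (peiffer1 x y) w) \/ z = q (omega x (peiffer1 y w)))]).

End Simplicial.

(* Every relation needed in L comes from dimension 3: the last face of the Moore
   projection of a commutator of degenerate elements of G_3 lies in d_3 NG_3, hence
   vanishes in L.  Four such commutators give, writing ^{s_k m} l for conjugation by
   s_k m and d for d_2,
     ^{del m} l = ^{s_0 m} l,          ^{s_0 m} l = omega(m, d l) ^{s_1 m} l,
     ^{s_1 m} l = omega(d l, m) l,     omega(d a, d b) [a, b] = 1      modulo d_3 NG_3,
   which together are QM3 and QM4.  As d omega(x, y) = <x, y>, the last relation also
   shows that the omega(x, y) commute in L; with the expansions of omega(x x', y) and
   omega(x, y y') this makes omega bimultiplicative, and modulo P_3' it kills Peiffer
   commutators in each variable, so it factors through C (x) C.  The other maps descend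
   to the quotients because P_3, d_3 NG_3 and P_3' lie in the kernels of the maps they
   are induced by. *)

From HB Require Import structures.
From mathcomp Require Import all_boot ssralg boolp.

Set Implicit Arguments.
Unset Strict Implicit.
Unset Printing Implicit Defensive.

Local Open Scope group_scope.

Ltac group_norm := rewrite ?invgM ?invgK ?invg1; rewrite ?mulgA;
  repeat progress rewrite ?mulgK ?mulgVK ?mulVg ?mulgV ?mul1g ?mulg1.

(** * Subgroups and quotient maps *)

Section Subgroups.
Variable G : groupType.
Implicit Types (H P : G -> Prop) (x y : G).

Lemma subgroup1 H : is_subgroup H -> H 1. Proof. by case. Qed.

Lemma subgroupM H x y : is_subgroup H -> H x -> H y -> H (x * y).
Proof. by case=> _ + _; apply. Qed.

Lemma subgroupV H x : is_subgroup H -> H x -> H x^-1.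
Proof. by case=> _ _; apply. Qed.

Lemma subgroupT : is_subgroup (fun _ : G => True). Proof. by []. Qed.

Lemma gen_by_subgroup P : is_subgroup (gen_by P).
Proof.
split=> [H sH _|x y gx gy H sH sPH|x gx H sH sPH]; first exact: subgroup1.
  by apply: subgroupM => //; [apply: gx | apply: gy].
by apply: subgroupV => //; apply: gx.
Qed.

Lemma gen_by_gen P x : P x -> gen_by P x.
Proof. by move=> Px H _; apply. Qed.

Lemma gen_by_min P H : is_subgroup H -> (forall y, P y -> H y) ->
  forall x, gen_by P x -> H x.
Proof. by move=> sH sPH x; apply. Qed.

Lemma centraliser_subgroup y : is_subgroup (fun x => x * y = y * x).
Proof.
split=> [|x z cxy czy|x cxy]; first by rewrite mul1g mulg1.
  by rewrite -mulgA czy !mulgA cxy.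
by apply: (mulgI x); rewrite mulVKg mulgA cxy mulgK.
Qed.

Lemma gen_by_commute P : (forall x y, P x -> P y -> x * y = y * x) ->
  forall x y, gen_by P x -> gen_by P y -> x * y = y * x.
Proof.
move=> cP x y gx gy.
have cPx z : P z -> x * z = z * x.
  by move=> Pz; apply: gen_by_min (centraliser_subgroup z) _ x gx => u Pu; apply: cP.
by apply/esym/(gen_by_min (centraliser_subgroup x) _ gy) => z /cPx.
Qed.

End Subgroups.

Section MorphismOn.
Variables (G X : groupType) (H : G -> Prop) (f : G -> X).
Hypothesis subH : is_subgroup H.
Hypothesis fM : forall x y, H x -> H y -> f (x * y) = f x * f y.

Lemma morph_on1 : f 1 = 1.
Proof. by apply: (mulgI (f 1)); rewrite -fM ?mulg1 //; apply: subgroup1. Qed.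

Lemma morph_onV x : H x -> f x^-1 = (f x)^-1.
Proof.
by move=> Hx; apply: (mulgI (f x)); rewrite -fM ?mulgV ?morph_on1 //; apply: subgroupV.
Qed.

Lemma morph_on_kernel : is_subgroup (fun z => H z /\ f z = 1).
Proof.
split=> [|x y [Hx fx] [Hy fy]|x [Hx fx]]; first by split; [apply: subgroup1 | apply: morph_on1].
  by split; [apply: subgroupM | rewrite fM // fx fy mulg1].
by split; [apply: subgroupV | rewrite morph_onV // fx invg1].
Qed.

Lemma morph_on_preimage (P : X -> Prop) :
  is_subgroup P -> is_subgroup (fun z => H z /\ P (f z)).
Proof.
move=> sP; split=> [|x y [Hx Px] [Hy Py]|x [Hx Px]].
- by split; [apply: subgroup1 | rewrite morph_on1; apply: subgroup1].
- by split; [apply: subgroupM | rewrite fM //; apply: subgroupM].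
- by split; [apply: subgroupV | rewrite morph_onV //; apply: subgroupV].
Qed.

Lemma morph_on_eq x y : H x -> H y -> f (x^-1 * y) = 1 -> f x = f y.
Proof.
move=> Hx Hy; rewrite fM ?morph_onV //; last exact: subgroupV.
by move=> e; apply: (mulgI (f x)^-1); rewrite mulVg e.
Qed.

End MorphismOn.

Section AdditiveOn.
Variables (G : groupType) (X : zmodType) (H : G -> Prop) (f : G -> X).
Hypothesis subH : is_subgroup H.
Hypothesis fM : forall x y, H x -> H y -> f (x * y) = (f x + f y)%R.

Lemma additive_on0 : f 1 = 0%R.
Proof.
by apply: (GRing.addrI (f 1)); rewrite -fM ?mulg1 ?GRing.addr0 //; apply: subgroup1.
Qed.

Lemma additive_onN x : H x -> f x^-1 = (- f x)%R.
Proof.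
move=> Hx; apply: (GRing.addrI (f x)).
by rewrite -fM ?mulgV ?additive_on0 ?GRing.subrr //; apply: subgroupV.
Qed.

Lemma additive_on_kernel : is_subgroup (fun z => H z /\ f z = 0%R).
Proof.
split=> [|x y [Hx fx] [Hy fy]|x [Hx fx]]; first by split; [apply: subgroup1 | apply: additive_on0].
  by split; [apply: subgroupM | rewrite fM // fx fy GRing.addr0].
by split; [apply: subgroupV | rewrite additive_onN // fx GRing.oppr0].
Qed.

Lemma additive_on_eq x y : H x -> H y -> f (x^-1 * y) = 0%R -> f x = f y.
Proof.
move=> Hx Hy; rewrite fM ?additive_onN //; last exact: subgroupV.
by move/eqP; rewrite GRing.addrC GRing.subr_eq0 => /eqP.
Qed.

End AdditiveOn.

Section QuotientMap.
Variables (G Q : groupType) (H K : G -> Prop) (q : G -> Q).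
Hypothesis subH : is_subgroup H.
Hypothesis qH : is_quotient_map H K q.

Lemma quotientM x y : H x -> H y -> q (x * y) = q x * q y.
Proof. by case: qH => + _ _; apply. Qed.

Lemma quotient_surj m : exists2 x, H x & q x = m.
Proof. by case: qH => _ + _; apply. Qed.

Lemma quotient_ker x : H x -> (q x = 1 <-> K x).
Proof. by case: qH => _ _; apply. Qed.

Lemma quotient1 : q 1 = 1. Proof. exact: morph_on1 subH quotientM. Qed.

Lemma quotientV x : H x -> q x^-1 = (q x)^-1.
Proof. exact: morph_onV subH quotientM x. Qed.

Lemma quotient_eqK x y : H x -> H y -> q x = q y -> K (x^-1 * y).
Proof.
move=> Hx Hy qxy; apply/quotient_ker; first by apply: subgroupM => //; apply: subgroupV.
by rewrite quotientM ?quotientV ?qxy ?mulVg //; apply: subgroupV.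
Qed.

Definition quotient_sec (m : Q) : G := s2val (cid2 (quotient_surj m)).

Lemma quotient_secH m : H (quotient_sec m).
Proof. by rewrite /quotient_sec; case: cid2. Qed.

Lemma quotient_secK m : q (quotient_sec m) = m.
Proof. by rewrite /quotient_sec; case: cid2. Qed.

Lemma quotient_sec_ker x : H x -> K ((quotient_sec (q x))^-1 * x).
Proof. by move=> Hx; apply: quotient_eqK; rewrite ?quotient_secK //; apply: quotient_secH. Qed.

Lemma quotient_sec_div x : H x -> H ((quotient_sec (q x))^-1 * x).
Proof. by move=> Hx; apply: subgroupM => //; apply: subgroupV => //; apply: quotient_secH. Qed.

Definition qlift (X : Type) (f : G -> X) (m : Q) : X := f (quotient_sec m).

Section GroupTarget.
Variables (X : groupType) (f : G -> X).
Hypothesis fM : forall x y, H x -> H y -> f (x * y) = f x * f y.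
Hypothesis fK : forall x, H x -> K x -> f x = 1.

Lemma qlift_quotient x : H x -> qlift f (q x) = f x.
Proof.
move=> Hx; apply: (morph_on_eq subH fM (quotient_secH _) Hx).
by apply: fK; [apply: quotient_sec_div | apply: quotient_sec_ker].
Qed.

Lemma qlift_morph m m' : qlift f (m * m') = qlift f m * qlift f m'.
Proof.
have [x Hx <-] := quotient_surj m; have [y Hy <-] := quotient_surj m'.
by rewrite -quotientM // !qlift_quotient ?fM //; apply: subgroupM.
Qed.

End GroupTarget.

Section ZmodTarget.
Variables (X : zmodType) (f : G -> X).
Hypothesis fM : forall x y, H x -> H y -> f (x * y) = (f x + f y)%R.
Hypothesis fK : forall x, H x -> K x -> f x = 0%R.

Lemma qlift_quotientZ x : H x -> qlift f (q x) = f x.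
Proof.
move=> Hx; apply: (additive_on_eq subH fM (quotient_secH _) Hx).
by apply: fK; [apply: quotient_sec_div | apply: quotient_sec_ker].
Qed.

Lemma qlift_additive m m' : qlift f (m * m') = (qlift f m + qlift f m')%R.
Proof.
have [x Hx <-] := quotient_surj m; have [y Hy <-] := quotient_surj m'.
by rewrite -quotientM // !qlift_quotientZ ?fM //; apply: subgroupM.
Qed.

End ZmodTarget.

End QuotientMap.

Lemma abelianization_eq (G : groupType) (C X : zmodType) (c : G -> C) (f : G -> X) :
  is_abelianization c -> (forall x y, f (x * y) = (f x + f y)%R) ->
  forall x y, c x = c y -> f x = f y.
Proof.
case=> cM _ cK fM x y cxy.
have fM' u v : True -> True -> f (u * v) = (f u + f v)%R by move=> _ _; apply: fM.
have cM' u v : True -> True -> c (u * v) = (c u + c v)%R by move=> _ _; apply: cM.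
have kerf z : commutator_subgroup z -> f z = 0%R.
  move=> cz; suff [] : True /\ f z = 0%R by [].
  apply: (gen_by_min (additive_on_kernel (subgroupT G) fM')) cz => _ [a [b ->]].
  split=> //; rewrite /gcomm !fM !(additive_onN (subgroupT G) fM') //.
  by rewrite [(f a + _)%R]GRing.addrC GRing.addrK GRing.subrr.
apply: (additive_on_eq (subgroupT G) fM') => //; apply/kerf/cK.
by rewrite cM (additive_onN (subgroupT G) cM') // cxy GRing.addNr.
Qed.

Section AbelianSubgroup.
Variables (G : groupType) (P : G -> Prop).
Hypothesis subP : is_subgroup P.
Hypothesis commP : forall x y, P x -> P y -> x * y = y * x.

(* The two proofs are parameters of the type so that its instances can use them. *)
Definition abelian_subgroup of is_subgroup P & (forall x y, P x -> P y -> x * y = y * x) :=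
  {x : G | P x}.
Local Notation A := (abelian_subgroup subP commP).

HB.instance Definition _ := gen_eqMixin A.
HB.instance Definition _ := gen_choiceMixin A.

Definition sub_zero : A := exist _ 1 (subgroup1 subP).
Definition sub_add (a b : A) : A :=
  exist _ (sval a * sval b) (subgroupM subP (svalP a) (svalP b)).
Definition sub_opp (a : A) : A := exist _ (sval a)^-1 (subgroupV subP (svalP a)).

Lemma sub_val_inj (a b : A) : sval a = sval b -> a = b.
Proof. by case: a b => [a Pa] [b Pb] /= eab; subst b; congr exist; apply: Prop_irrelevance. Qed.

Lemma sub_addA : associative sub_add.
Proof. by move=> a b c; apply: sub_val_inj; rewrite /= mulgA. Qed.
Lemma sub_addC : commutative sub_add.
Proof. by move=> a b; apply: sub_val_inj; rewrite /= commP //; apply: svalP. Qed.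
Lemma sub_add0 : left_id sub_zero sub_add.
Proof. by move=> a; apply: sub_val_inj; rewrite /= mul1g. Qed.
Lemma sub_addN : left_inverse sub_zero sub_opp sub_add.
Proof. by move=> a; apply: sub_val_inj; rewrite /= mulVg. Qed.

HB.instance Definition _ := GRing.isZmodule.Build A sub_addA sub_addC sub_add0 sub_addN.

Lemma sub_valD (a b : A) : sval (a + b)%R = sval a * sval b. Proof. by []. Qed.
Lemma sub_val0 : sval (0%R : A) = 1. Proof. by []. Qed.

(* Outside [P] the value [0] is junk. *)
Definition to_sub (x : G) : A :=
  if pselect (P x) is left Px then exist _ x Px else 0%R.

Lemma to_subK x : P x -> sval (to_sub x) = x.
Proof. by rewrite /to_sub; case: pselect. Qed.

End AbelianSubgroup.

(** * Low-dimensional identities in a simplicial group *)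

Section FaceDegeneracy.
Variable S : simplicial_group.

Lemma face1 n i : face S n i 1 = 1.
Proof. exact: morph_on1 (subgroupT _) (fun x y _ _ => face_hom S n i x y). Qed.

Lemma degen1 n i : degen S n i 1 = 1.
Proof. exact: morph_on1 (subgroupT _) (fun x y _ _ => degen_hom S n i x y). Qed.

Lemma faceV n i (x : SG S n.+1) : face S n i x^-1 = (face S n i x)^-1.
Proof. exact: morph_onV (subgroupT _) (fun x y _ _ => face_hom S n i x y) x I. Qed.

Lemma degenV n i (x : SG S n) : degen S n i x^-1 = (degen S n i x)^-1.
Proof. exact: morph_onV (subgroupT _) (fun x y _ _ => degen_hom S n i x y) x I. Qed.

End FaceDegeneracy.

(* One step of rewriting towards the normal form s_.. d_..: [match goal] backtracks
   over all occurrences until the side conditions of a simplicial identity hold. *)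
Ltac simplicial_step :=
  match goal with
  | |- context [face ?S ?n ?i (degen ?S ?n ?j ?x)] =>
      first [ rewrite (@face_degen_eq S n i x); [|done]
            | rewrite (@face_degen_succ S n j x); [|done]
            | rewrite (@face_degen_lt S _ i j x); [|done|done]
            | rewrite (@face_degen_gt S _ i j x); [|done|done] ]
  | |- context [face ?S ?n ?i (face ?S ?m ?j ?x)] =>
      rewrite (@face_face S n i j x); [|done|done]
  | |- context [degen ?S ?n ?i (degen ?S ?m ?j ?x)] =>
      rewrite (@degen_degen S m i j x); [|done|done]
  end.

Ltac simplicial := repeat progress
  (rewrite ?face_hom ?degen_hom ?faceV ?degenV ?face1 ?degen1; try simplicial_step; rewrite /=).

Section MooreComplex.
Variable S : simplicial_group.
Local Notation G := (SG S).
Local Notation d := (face S).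
Local Notation s := (degen S).

Lemma moore1P (x : G 1) : moore x <-> d 0 0 x = 1.
Proof. by split=> [|dx [|]//]; apply. Qed.

Lemma moore2P (x : G 2) : moore x <-> d 1 0 x = 1 /\ d 1 1 x = 1.
Proof. by split=> [Nx|[dx0 dx1] [|[|]]//]; split; apply: Nx. Qed.

Lemma moore3E (y : G 3) : moore y -> [/\ d 2 0 y = 1, d 2 1 y = 1 & d 2 2 y = 1].
Proof. by move=> Ny; split; apply: Ny. Qed.

Lemma moore_subgroup n : is_subgroup (@moore S n).
Proof.
case: n => [|n]; first by [].
split=> [i _|x y Nx Ny i le_in|x Nx i le_in]; first exact: face1.
  by rewrite face_hom Nx ?Ny ?mulg1.
by rewrite faceV Nx ?invg1.
Qed.

Lemma act1_1 (y : G 1) : act1 1 y = y.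
Proof. by rewrite /act1; simplicial; group_norm. Qed.

Lemma act1_comp n n' (y : G 1) : act1 (n * n') y = act1 n (act1 n' y).
Proof. by rewrite /act1; simplicial; group_norm. Qed.

Lemma act1M n (x y : G 1) : act1 n (x * y) = act1 n x * act1 n y.
Proof. by rewrite /act1; group_norm. Qed.

Lemma act1_moore n (y : G 1) : moore y -> moore (act1 n y).
Proof. by move=> /moore1P dy; apply/moore1P; rewrite /act1; simplicial; rewrite dy; group_norm. Qed.

Lemma del1_act1 n (x : G 1) : del1 (act1 n x) = n * del1 x * n^-1.
Proof. by rewrite /act1 /del1; simplicial. Qed.

Lemma act1_peiffer1 n (x y : G 1) :
  act1 n (peiffer1 x y) = peiffer1 (act1 n x) (act1 n y).
Proof. by rewrite /peiffer1 !del1_act1 /act1 /del1; simplicial; group_norm. Qed.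

Lemma peiffer1_moore (x y : G 1) : moore x -> moore y -> moore (peiffer1 x y).
Proof.
move=> /moore1P dx /moore1P dy; apply/moore1P.
by rewrite /peiffer1 /act1 /del1; simplicial; rewrite dx dy; group_norm.
Qed.

Lemma del1_peiffer1 (x y : G 1) : del1 (peiffer1 x y) = 1.
Proof. by rewrite /peiffer1 /act1 /del1; simplicial; group_norm. Qed.

Lemma face2_moore (l : G 2) : moore l -> moore (d 1 2 l).
Proof. by move=> /moore2P[dl0 _]; apply/moore1P; simplicial; rewrite dl0 face1. Qed.

Lemma del1_face2 (l : G 2) : moore l -> del1 (d 1 2 l) = 1.
Proof. by move=> /moore2P[_ dl1]; rewrite /del1; simplicial; rewrite dl1 face1. Qed.

Lemma omega_moore (x y : G 1) : moore x -> moore y -> moore (omega x y).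
Proof.
move=> /moore1P dx /moore1P dy; apply/moore2P.
by rewrite /omega; split; simplicial; rewrite ?dx ?dy; simplicial; group_norm.
Qed.

Lemma face_omega (x y : G 1) : d 1 2 (omega x y) = peiffer1 x y.
Proof. by rewrite /omega /peiffer1 /act1 /del1; simplicial; group_norm. Qed.

Lemma omega_x1 (x : G 1) : omega x 1 = 1.
Proof. by rewrite /omega; simplicial; group_norm. Qed.

Lemma act2_1 (l : G 2) : act2 1 l = l.
Proof. by rewrite /act2; simplicial; group_norm. Qed.

Lemma act2_comp n n' (l : G 2) : act2 (n * n') l = act2 n (act2 n' l).
Proof. by rewrite /act2; simplicial; group_norm. Qed.

Lemma act2M n (l l' : G 2) : act2 n (l * l') = act2 n l * act2 n l'.
Proof. by rewrite /act2; group_norm. Qed.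

Lemma act2_moore n (l : G 2) : moore l -> moore (act2 n l).
Proof.
move=> /moore2P[dl0 dl1]; apply/moore2P.
by rewrite /act2; split; simplicial; rewrite ?dl0 ?dl1; group_norm.
Qed.

Lemma face_act2 n (l : G 2) : d 1 2 (act2 n l) = act1 n (d 1 2 l).
Proof. by rewrite /act2 /act1; simplicial. Qed.

Lemma act2_omega n (x y : G 1) : act2 n (omega x y) = omega (act1 n x) (act1 n y).
Proof. by rewrite /act2 /omega /act1; simplicial; group_norm. Qed.

Definition sconj (k : nat) (m : G 1) (l : G 2) : G 2 := s 1 k m * l * (s 1 k m)^-1.

Lemma sconj_moore k (m : G 1) (l : G 2) :
  k <= 1 -> moore m -> moore l -> moore (sconj k m l).
Proof.
move=> le_k1 /moore1P dm /moore2P[dl0 dl1]; apply/moore2P; rewrite /sconj.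
by case: k le_k1 => [|[|]] // _; split; simplicial; rewrite ?dm ?dl0 ?dl1; simplicial; group_norm.
Qed.

Lemma omegaMr (x y y' : G 1) :
  omega x (y * y') = omega x y * sconj 1 (x * y * x^-1) (omega x y').
Proof. by rewrite /omega /sconj; simplicial; group_norm. Qed.

Lemma omegaMl (x x' y : G 1) :
  omega (x * x') y = sconj 0 x (omega x' y) * omega x (x' * y * x'^-1).
Proof. by rewrite /omega /sconj; simplicial; group_norm. Qed.

Lemma bd3_moore (z : G 2) : bd3 z -> moore z.
Proof.
case=> y /moore3E[dy0 dy1 dy2] <-; apply/moore2P.
by split; simplicial; rewrite ?dy0 ?dy1 ?dy2; simplicial.
Qed.

Lemma bd3_face2 (z : G 2) : bd3 z -> d 1 2 z = 1.
Proof. by case=> y /moore3E[_ _ dy2] <-; simplicial; rewrite dy2 face1. Qed.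

Lemma bd3_act2 n (z : G 2) : bd3 z -> bd3 (act2 n z).
Proof.
case=> y /moore3E[dy0 dy1 dy2] <-.
pose c := s 2 0 (s 1 0 (s 0 0 n)).
exists (c * y * c^-1); last by rewrite /c /act2; simplicial.
by case=> [|[|[|]]] // _; rewrite /c; simplicial; rewrite ?dy0 ?dy1 ?dy2; group_norm.
Qed.

(* The Moore projection G_3 -> NG_3, killing d_0, d_1, d_2 in turn. *)
Definition moore_proj3 (z : G 3) : G 3 :=
  let z0 := z * (s 2 0 (d 2 0 z))^-1 in
  let z1 := z0 * (s 2 1 (d 2 1 z0))^-1 in
  z1 * (s 2 2 (d 2 2 z1))^-1.

Lemma moore_proj3_moore z : moore (moore_proj3 z).
Proof. by case=> [|[|[|]]] // _; rewrite /moore_proj3; simplicial; group_norm. Qed.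

Lemma bd3_face_proj3 z : bd3 (d 2 3 (moore_proj3 z)).
Proof. by exists (moore_proj3 z) => //; apply: moore_proj3_moore. Qed.

Lemma bd3_act2_sconj0 (m : G 1) (l : G 2) : moore m -> moore l ->
  bd3 (act2 (del1 m) l * (sconj 0 m l)^-1).
Proof.
move=> /moore1P dm /moore2P[dl0 dl1].
have := bd3_face_proj3 (gcomm (s 2 1 (s 1 0 m)) (s 2 2 l)).
rewrite /moore_proj3 /gcomm /sconj /act2 /del1.
by simplicial; rewrite ?dm ?dl0 ?dl1; simplicial; group_norm.
Qed.

Lemma bd3_sconj0_sconj1 (m : G 1) (l : G 2) : moore m -> moore l ->
  bd3 (omega m (d 1 2 l) * sconj 1 m l * (sconj 0 m l)^-1).
Proof.
move=> /moore1P dm /moore2P[dl0 dl1].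
have := bd3_face_proj3 (gcomm (s 2 2 (s 1 0 m)) (s 2 1 l)).
rewrite /moore_proj3 /gcomm /sconj /omega.
by simplicial; rewrite ?dm ?dl0 ?dl1; simplicial; group_norm.
Qed.

Lemma bd3_sconj1 (m : G 1) (l : G 2) : moore m -> moore l ->
  bd3 (omega (d 1 2 l) m * l * (sconj 1 m l)^-1).
Proof.
move=> /moore1P dm /moore2P[dl0 dl1].
have := bd3_face_proj3 (gcomm (s 2 0 l) (s 2 2 (s 1 1 m))).
rewrite /moore_proj3 /gcomm /sconj /omega.
by simplicial; rewrite ?dm ?dl0 ?dl1; simplicial; group_norm.
Qed.

Lemma bd3_omega_comm (a b : G 2) : moore a -> moore b ->
  bd3 (omega (d 1 2 a) (d 1 2 b) * gcomm a b).
Proof.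
move=> /moore2P[da0 da1] /moore2P[db0 db1].
have := bd3_face_proj3 (gcomm (s 2 0 a) (s 2 1 b)).
rewrite /moore_proj3 /gcomm /omega.
by simplicial; rewrite ?da0 ?da1 ?db0 ?db1; simplicial; group_norm.
Qed.

End MooreComplex.

Ltac moore_auto := solve [repeat first
  [ done | apply: peiffer1_moore | apply: omega_moore | apply: act1_moore
  | apply: act2_moore | apply: face2_moore | apply: sconj_moore
  | apply: (subgroupM (moore_subgroup _ _)) | apply: (subgroupV (moore_subgroup _ _)) ]].

(** * The quotients M and L *)

Section Quotients.
Variable S : simplicial_group.
Local Notation G := (SG S).
Local Notation d := (face S).
Variables (M : groupType) (q1 : G 1 -> M).
Hypothesis q1P : is_quotient_map (@moore S 1) (@P3 S) q1.
Variables (Q : groupType) (q : G 2 -> Q).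
Hypothesis qP : is_quotient_map (@moore S 2) (@bd3 S) q.
Variables (L : groupType) (q2 : Q -> L).
Hypothesis q2P : is_quotient_map (fun _ => True) (P3' q) q2.

Let N1 := moore_subgroup S 1.
Let N2 := moore_subgroup S 2.

Lemma P3_min (K : G 1 -> Prop) : is_subgroup K ->
  (forall x y w, moore x -> moore y -> moore w ->
     K (peiffer1 x (peiffer1 y w)) /\ K (peiffer1 (peiffer1 x y) w)) ->
  forall z, P3 z -> K z.
Proof.
move=> sK genK; apply: gen_by_min sK _ => _ [x [y [w [Nx Ny Nw [->|->]]]]].
  by case: (genK x y w).
by case: (genK x y w).
Qed.

Lemma P3_gen (x y w : G 1) : moore x -> moore y -> moore w ->
  P3 (peiffer1 x (peiffer1 y w)) /\ P3 (peiffer1 (peiffer1 x y) w).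
Proof.
by move=> Nx Ny Nw; split; apply: gen_by_gen; exists x, y, w; split=> //; [left|right].
Qed.

Lemma P3_moore (z : G 1) : P3 z -> moore z.
Proof. by apply: (P3_min N1) => x y w Nx Ny Nw; split; do ?apply: peiffer1_moore. Qed.

Lemma q1M (x y : G 1) : moore x -> moore y -> q1 (x * y) = q1 x * q1 y.
Proof. by move=> Nx Ny; rewrite (quotientM q1P Nx Ny). Qed.

Lemma q1_P3gen (x y w : G 1) : moore x -> moore y -> moore w ->
  q1 (peiffer1 x (peiffer1 y w)) = 1 /\ q1 (peiffer1 (peiffer1 x y) w) = 1.
Proof.
move=> Nx Ny Nw; have [P3l P3r] := P3_gen Nx Ny Nw.
by split; apply/(quotient_ker q1P) => //; apply: P3_moore.
Qed.

Lemma P3_kernel (X : groupType) (f : G 1 -> X) :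
  (forall x y, moore x -> moore y -> f (x * y) = f x * f y) ->
  (forall x y w, moore x -> moore y -> moore w ->
     f (peiffer1 x (peiffer1 y w)) = 1 /\ f (peiffer1 (peiffer1 x y) w) = 1) ->
  forall z, P3 z -> f z = 1.
Proof.
move=> fM fP3 z P3z; suff [] : moore z /\ f z = 1 by [].
apply: (P3_min (morph_on_kernel N1 fM)) P3z => x y w Nx Ny Nw.
by have [fl fr] := fP3 x y w Nx Ny Nw; do ?split; do ?apply: peiffer1_moore.
Qed.

Let del1M (x y : G 1) : moore x -> moore y -> del1 (x * y) = del1 x * del1 y.
Proof. by move=> *; apply: face_hom. Qed.

Let del1_P3 (z : G 1) : moore z -> P3 z -> del1 z = 1.
Proof. by move=> _; apply: P3_kernel del1M _ z => *; rewrite !del1_peiffer1. Qed.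

Definition dM : M -> G 0 := qlift q1P (@del1 S).

Lemma dM_q1 (x : G 1) : moore x -> dM (q1 x) = del1 x.
Proof. by move=> Nx; apply: (qlift_quotient N1 q1P del1M del1_P3 Nx). Qed.

Lemma dM_morph : is_hom dM.
Proof. by move=> m m'; apply: (qlift_morph N1 q1P del1M del1_P3). Qed.

Definition actM (n : G 0) : M -> M := qlift q1P (fun y => q1 (act1 n y)).

Section ActM.
Variable n : G 0.

Let q1act1M (x y : G 1) : moore x -> moore y ->
  q1 (act1 n (x * y)) = q1 (act1 n x) * q1 (act1 n y).
Proof. by move=> Nx Ny; rewrite act1M q1M //; apply: act1_moore. Qed.

Let q1act1_P3 (z : G 1) : moore z -> P3 z -> q1 (act1 n z) = 1.
Proof.
move=> _; apply: P3_kernel q1act1M _ z => x y w Nx Ny Nw.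
by rewrite !act1_peiffer1; apply: q1_P3gen; apply: act1_moore.
Qed.

Lemma actM_q1 (y : G 1) : moore y -> actM n (q1 y) = q1 (act1 n y).
Proof. by move=> Ny; apply: (qlift_quotient N1 q1P q1act1M q1act1_P3 Ny). Qed.

Lemma actM_morph : is_hom (actM n).
Proof. by move=> m m'; apply: (qlift_morph N1 q1P q1act1M q1act1_P3). Qed.

End ActM.

Lemma actM_action : is_group_action actM.
Proof.
split=> [m|n n' m|n]; last exact: actM_morph.
  by have [x Nx <-] := quotient_surj q1P m; rewrite actM_q1 // act1_1.
by have [x Nx <-] := quotient_surj q1P m; rewrite !actM_q1 ?act1_comp //; apply: act1_moore.
Qed.

Lemma dM_actM n m : dM (actM n m) = n * dM m * n^-1.
Proof.
have [x Nx <-] := quotient_surj q1P m.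
by rewrite actM_q1 // !dM_q1 ?del1_act1 //; apply: act1_moore.
Qed.

Lemma peiffer_q1 (x y : G 1) : moore x -> moore y ->
  peiffer actM dM (q1 x) (q1 y) = q1 (peiffer1 x y).
Proof.
move=> Nx Ny; have Nax := act1_moore (del1 x) Ny.
have NxV := subgroupV N1 Nx; have NyV := subgroupV N1 Ny.
rewrite /peiffer /peiffer1 dM_q1 // actM_q1 //.
have Naxx := subgroupM N1 Nax Nx; have Naxy := subgroupM N1 Naxx NyV.
rewrite (q1M Naxy NxV) (q1M Naxx NyV) (q1M Nax Nx).
by rewrite !(quotientV N1 q1P).
Qed.

Lemma nil2_module_dM : nil2_module actM dM.
Proof.
split; first by split; [exact: dM_morph | exact: actM_action | exact: dM_actM].
move=> m1 m2 m3; have [x Nx <-] := quotient_surj q1P m1.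
have [y Ny <-] := quotient_surj q1P m2; have [w Nw <-] := quotient_surj q1P m3.
have Nxy := peiffer1_moore Nx Ny; have Nyw := peiffer1_moore Ny Nw.
by rewrite !peiffer_q1 //; case: (q1_P3gen Nx Ny Nw) => -> ->.
Qed.

Definition toL (z : G 2) : L := q2 (q z).

Lemma toLM (z z' : G 2) : moore z -> moore z' -> toL (z * z') = toL z * toL z'.
Proof. by move=> Nz Nz'; rewrite /toL (quotientM qP Nz Nz') (quotientM q2P I I). Qed.

Lemma toLV (z : G 2) : moore z -> toL z^-1 = (toL z)^-1.
Proof. exact: morph_onV N2 toLM z. Qed.

Lemma toL_bd3 (z : G 2) : bd3 z -> toL z = 1.
Proof.
move=> bz; rewrite /toL (proj2 (quotient_ker qP (bd3_moore bz)) bz).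
exact: quotient1 (subgroupT Q) q2P.
Qed.

Lemma toL_eq_bd3 (z z' : G 2) : moore z -> moore z' -> bd3 (z * z'^-1) -> toL z = toL z'.
Proof.
move=> Nz Nz' /toL_bd3; rewrite toLM ?toLV //; last exact: (subgroupV N2).
exact: divg1_eq.
Qed.

Lemma toL_P3'gen (x y w : G 1) : moore x -> moore y -> moore w ->
  toL (omega (peiffer1 x y) w) = 1 /\ toL (omega x (peiffer1 y w)) = 1.
Proof.
move=> Nx Ny Nw; split; apply/(quotient_ker q2P I); apply: gen_by_gen.
  by exists x, y, w; split=> //; left.
by exists x, y, w; split=> //; right.
Qed.

Definition liftL (X : Type) (f : G 2 -> X) : L -> X := qlift q2P (qlift qP f).

Section LiftL.
Variables (X : groupType) (f : G 2 -> X).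
Hypothesis fM : forall z z', moore z -> moore z' -> f (z * z') = f z * f z'.
Hypothesis f_bd3 : forall z, bd3 z -> f z = 1.
Hypothesis f_P3'gen : forall x y w, moore x -> moore y -> moore w ->
  f (omega (peiffer1 x y) w) = 1 /\ f (omega x (peiffer1 y w)) = 1.

Let fQ := qlift qP f.

Let fQ_q (z : G 2) : moore z -> fQ (q z) = f z.
Proof. by move=> Nz; rewrite /fQ (qlift_quotient N2 qP fM (fun _ _ bz => f_bd3 bz) Nz). Qed.

Let fQM (u v : Q) : True -> True -> fQ (u * v) = fQ u * fQ v.
Proof. by move=> _ _; rewrite /fQ (qlift_morph N2 qP fM (fun _ _ bz => f_bd3 bz)). Qed.

Let fQ_P3' (u : Q) : True -> P3' q u -> fQ u = 1.
Proof.
move=> _ P3'u; suff [] : True /\ fQ u = 1 by [].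
apply: (gen_by_min (morph_on_kernel (subgroupT Q) fQM)) P3'u.
move=> u' [x [y [w [Nx Ny Nw eu]]]].
have [fl fr] := f_P3'gen Nx Ny Nw.
by case: eu => ->; split=> //; rewrite fQ_q //; apply: omega_moore; do ?apply: peiffer1_moore.
Qed.

Lemma liftL_toL (z : G 2) : moore z -> liftL f (toL z) = f z.
Proof. by move=> Nz; rewrite /liftL (qlift_quotient (subgroupT Q) q2P fQM fQ_P3') ?fQ_q. Qed.

Lemma liftL_morph : is_hom (liftL f).
Proof. by move=> a b; apply: (qlift_morph (subgroupT Q) q2P fQM fQ_P3'). Qed.

End LiftL.

Definition delL : L -> M := liftL (fun z => q1 (d 1 2 z)).

Let q1face2M (z z' : G 2) : moore z -> moore z' ->
  q1 (d 1 2 (z * z')) = q1 (d 1 2 z) * q1 (d 1 2 z').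
Proof. by move=> Nz Nz'; rewrite face_hom q1M //; apply: face2_moore. Qed.

Let q1face2_bd3 (z : G 2) : bd3 z -> q1 (d 1 2 z) = 1.
Proof. by move=> /bd3_face2 ->; apply: quotient1 N1 q1P. Qed.

Let q1face2_P3'gen (x y w : G 1) : moore x -> moore y -> moore w ->
  q1 (d 1 2 (omega (peiffer1 x y) w)) = 1 /\ q1 (d 1 2 (omega x (peiffer1 y w))) = 1.
Proof. by move=> Nx Ny Nw; rewrite !face_omega; case: (q1_P3gen Nx Ny Nw). Qed.

Lemma delL_toL (z : G 2) : moore z -> delL (toL z) = q1 (d 1 2 z).
Proof. exact: liftL_toL q1face2M q1face2_bd3 q1face2_P3'gen z. Qed.

Lemma delL_morph : is_hom delL.
Proof. exact: liftL_morph q1face2M q1face2_bd3 q1face2_P3'gen. Qed.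

Definition actL (n : G 0) : L -> L := liftL (fun z => toL (act2 n z)).

Section ActL.
Variable n : G 0.

Let toLact2M (z z' : G 2) : moore z -> moore z' ->
  toL (act2 n (z * z')) = toL (act2 n z) * toL (act2 n z').
Proof. by move=> Nz Nz'; rewrite act2M toLM //; apply: act2_moore. Qed.

Let toLact2_bd3 (z : G 2) : bd3 z -> toL (act2 n z) = 1.
Proof. by move=> bz; apply/toL_bd3/bd3_act2. Qed.

Let toLact2_P3'gen (x y w : G 1) : moore x -> moore y -> moore w ->
  toL (act2 n (omega (peiffer1 x y) w)) = 1 /\ toL (act2 n (omega x (peiffer1 y w))) = 1.
Proof.
by move=> Nx Ny Nw; rewrite !act2_omega !act1_peiffer1; apply: toL_P3'gen; apply: act1_moore.
Qed.

Lemma actL_toL (z : G 2) : moore z -> actL n (toL z) = toL (act2 n z).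
Proof. exact: liftL_toL toLact2M toLact2_bd3 toLact2_P3'gen z. Qed.

Lemma actL_morph : is_hom (actL n).
Proof. exact: liftL_morph toLact2M toLact2_bd3 toLact2_P3'gen. Qed.

End ActL.

Lemma toL_surj (a : L) : exists2 z, moore z & toL z = a.
Proof.
have [u _ <-] := quotient_surj q2P a; have [z Nz <-] := quotient_surj qP u.
by exists z.
Qed.

Lemma actL_action : is_group_action actL.
Proof.
split=> [a|n n' a|n]; last exact: actL_morph.
  by have [z Nz <-] := toL_surj a; rewrite actL_toL // act2_1.
by have [z Nz <-] := toL_surj a; rewrite !actL_toL ?act2_comp //; apply: act2_moore.
Qed.

Lemma delL_actL n (a : L) : delL (actL n a) = actM n (delL a).
Proof.
have [z Nz <-] := toL_surj a.
by rewrite actL_toL // !delL_toL ?face_act2 ?actM_q1 //; [apply: face2_moore | apply: act2_moore].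
Qed.

Lemma dM_delL (a : L) : dM (delL a) = 1.
Proof.
by have [z Nz <-] := toL_surj a; rewrite delL_toL // dM_q1 ?del1_face2 //; apply: face2_moore.
Qed.

Definition omegaL (x y : G 1) : L := toL (omega x y).

Lemma toL_sconj1 (m : G 1) (l : G 2) : moore m -> moore l ->
  toL (sconj 1 m l) = omegaL (d 1 2 l) m * toL l.
Proof.
move=> Nm Nl; rewrite /omegaL -toLM; try moore_auto.
by apply/esym/(toL_eq_bd3 _ _ (bd3_sconj1 Nm Nl)); moore_auto.
Qed.

Lemma toL_sconj0 (m : G 1) (l : G 2) : moore m -> moore l ->
  toL (sconj 0 m l) = omegaL m (d 1 2 l) * toL (sconj 1 m l).
Proof.
move=> Nm Nl; rewrite /omegaL -toLM; try moore_auto.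
by apply/esym/(toL_eq_bd3 _ _ (bd3_sconj0_sconj1 Nm Nl)); moore_auto.
Qed.

Lemma toL_act2_del1 (m : G 1) (l : G 2) : moore m -> moore l ->
  toL (act2 (del1 m) l) = omegaL m (d 1 2 l) * omegaL (d 1 2 l) m * toL l.
Proof.
move=> Nm Nl; rewrite (toL_eq_bd3 _ _ (bd3_act2_sconj0 Nm Nl)); try moore_auto.
by rewrite toL_sconj0 // toL_sconj1 // mulgA.
Qed.

Lemma omegaL_face2 (a b : G 2) : moore a -> moore b ->
  omegaL (d 1 2 a) (d 1 2 b) = gcomm (toL b) (toL a).
Proof.
move=> Na Nb; have := bd3_omega_comm Na Nb; rewrite -[gcomm a b]invgK.
rewrite /omegaL => /toL_eq_bd3 -> //; try moore_auto.
rewrite toLV /gcomm; try moore_auto.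
by rewrite !toLM ?toLV; try moore_auto; group_norm.
Qed.

Lemma omegaL_peiffer1l (x y w : G 1) : moore x -> moore y -> moore w ->
  omegaL (peiffer1 x y) w = 1.
Proof. by move=> Nx Ny Nw; case: (toL_P3'gen Nx Ny Nw). Qed.

Lemma omegaL_peiffer1r (w x y : G 1) : moore w -> moore x -> moore y ->
  omegaL w (peiffer1 x y) = 1.
Proof. by move=> Nw Nx Ny; case: (toL_P3'gen Nw Nx Ny). Qed.

Lemma toL_sconj1_omega (m x y : G 1) : moore m -> moore x -> moore y ->
  toL (sconj 1 m (omega x y)) = omegaL x y.
Proof.
move=> Nm Nx Ny; rewrite toL_sconj1 ?face_omega ?omegaL_peiffer1l ?mul1g //.
exact: omega_moore.
Qed.

Lemma toL_sconj0_omega (m x y : G 1) : moore m -> moore x -> moore y ->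
  toL (sconj 0 m (omega x y)) = omegaL x y.
Proof.
move=> Nm Nx Ny; rewrite toL_sconj0 ?face_omega ?omegaL_peiffer1r ?mul1g ?toL_sconj1_omega //.
exact: omega_moore.
Qed.

(* By [omegaL_face2] the commutator is [omegaL] of two Peiffer commutators. *)
Lemma omegaL_commute (x y x' y' : G 1) : moore x -> moore y -> moore x' -> moore y' ->
  omegaL x y * omegaL x' y' = omegaL x' y' * omegaL x y.
Proof.
move=> Nx Ny Nx' Ny'.
have := omegaL_face2 (omega_moore Nx' Ny') (omega_moore Nx Ny).
rewrite !face_omega (omegaL_peiffer1l Nx' Ny' (peiffer1_moore Nx Ny)) /gcomm /omegaL => e.
by rewrite -{2}(divg1_eq (esym e)) mulgVK.
Qed.

Lemma omegaLMr (x y y' : G 1) : moore x -> moore y -> moore y' ->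
  omegaL x (y * y') = omegaL x y * omegaL x y'.
Proof.
move=> Nx Ny Ny'; rewrite /omegaL omegaMr toLM ?toL_sconj1_omega //; moore_auto.
Qed.

Lemma omegaLVr (x y : G 1) : moore x -> moore y -> omegaL x y^-1 = (omegaL x y)^-1.
Proof.
move=> Nx Ny; apply: (mulgI (omegaL x y)).
by rewrite -omegaLMr ?mulgV /omegaL ?omega_x1 ?(morph_on1 N2 toLM) //; moore_auto.
Qed.

Lemma omegaLMl (x x' y : G 1) : moore x -> moore x' -> moore y ->
  omegaL (x * x') y = omegaL x y * omegaL x' y.
Proof.
move=> Nx Nx' Ny; rewrite {1}/omegaL omegaMl toLM ?toL_sconj0_omega; try moore_auto.
rewrite -/(omegaL x _) !omegaLMr ?omegaLVr; try moore_auto.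
by rewrite (omegaL_commute Nx Nx' Nx Ny) mulgK omegaL_commute.
Qed.

Definition omegaL_span : L -> Prop :=
  gen_by (fun a => exists x y, [/\ moore x, moore y & a = omegaL x y]).

Lemma omegaL_span_omegaL (x y : G 1) : moore x -> moore y -> omegaL_span (omegaL x y).
Proof. by move=> Nx Ny; apply: gen_by_gen; exists x, y. Qed.

Lemma omegaL_span_commute (a b : L) : omegaL_span a -> omegaL_span b -> a * b = b * a.
Proof.
apply: gen_by_commute => _ _ [x [y [Nx Ny ->]]] [x' [y' [Nx' Ny' ->]]].
exact: omegaL_commute.
Qed.

Lemma omegaL_span_actL n (a : L) : omegaL_span a -> omegaL_span (actL n a).
Proof.
move=> span_a; suff [] : True /\ omegaL_span (actL n a) by [].
apply: (gen_by_min (morph_on_preimage (subgroupT L) (fun a b _ _ => actL_morph n a b)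
  (gen_by_subgroup _))) span_a => _ [x [y [Nx Ny ->]]].
rewrite /omegaL actL_toL ?act2_omega; last exact: omega_moore.
by split=> //; apply: omegaL_span_omegaL; apply: act1_moore.
Qed.

(** * The quadratic module *)

Section Abelianization.
Variables (Mcr : groupType) (qcr : M -> Mcr) (C : zmodType) (cab : Mcr -> C).
Hypothesis qcrP : is_quotient_map (fun _ => True) (peiffer_subgroup actM dM) qcr.
Hypothesis cabP : is_abelianization cab.

Definition classC (x : G 1) : C := cab (qcr (q1 x)).

Lemma classCM (x y : G 1) : moore x -> moore y ->
  classC (x * y) = (classC x + classC y)%R.
Proof.
by case: cabP => cabM _ _ Nx Ny; rewrite /classC q1M // (quotientM qcrP I I) cabM.
Qed.

Lemma classC_surj (c : C) : exists2 x, moore x & classC x = c.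
Proof.
case: cabP => _ cab_surj _; have [u <-] := cab_surj c.
have [m _ <-] := quotient_surj qcrP u; have [x Nx <-] := quotient_surj q1P m.
by exists x.
Qed.

Lemma classC_peiffer1 (x y : G 1) : moore x -> moore y -> classC (peiffer1 x y) = 0%R.
Proof.
case: cabP => cabM _ _ Nx Ny; rewrite /classC -peiffer_q1 //.
rewrite (proj2 (quotient_ker qcrP I) (gen_by_gen _)); last by exists (q1 x), (q1 y).
exact: additive_on0 (subgroupT Mcr) (fun u v _ _ => cabM u v).
Qed.

Section Descent.
Variables (X : zmodType) (f : G 1 -> X).
Hypothesis f_additive : forall x y, moore x -> moore y -> f (x * y) = (f x + f y)%R.
Hypothesis f_peiffer1 : forall x y, moore x -> moore y -> f (peiffer1 x y) = 0%R.

Let f_P3 (z : G 1) : moore z -> P3 z -> f z = 0%R.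
Proof.
move=> _ P3z; suff [] : moore z /\ f z = 0%R by [].
apply: (P3_min (additive_on_kernel N1 f_additive)) P3z => x y w Nx Ny Nw.
by do ?split; do ?apply: f_peiffer1; moore_auto.
Qed.

Let fM := qlift q1P f.

Let fM_q1 (x : G 1) : moore x -> fM (q1 x) = f x.
Proof. by move=> Nx; rewrite /fM (qlift_quotientZ N1 q1P f_additive f_P3 Nx). Qed.

Let fM_additive (m m' : M) : True -> True -> fM (m * m') = (fM m + fM m')%R.
Proof. by move=> _ _; rewrite /fM (qlift_additive N1 q1P f_additive f_P3). Qed.

Let fM_peiffer (m : M) : True -> peiffer_subgroup actM dM m -> fM m = 0%R.
Proof.
move=> _ Pm; suff [] : True /\ fM m = 0%R by [].
apply: (gen_by_min (additive_on_kernel (subgroupT M) fM_additive)) Pm => _ [m1 [m2 ->]].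
have [x Nx <-] := quotient_surj q1P m1; have [y Ny <-] := quotient_surj q1P m2.
by rewrite peiffer_q1 // fM_q1 ?f_peiffer1 //; moore_auto.
Qed.

Let fMcr := qlift qcrP fM.

Let fMcr_additive (u v : Mcr) : fMcr (u * v) = (fMcr u + fMcr v)%R.
Proof. by rewrite /fMcr (qlift_additive (subgroupT M) qcrP fM_additive fM_peiffer). Qed.

Lemma classC_eq (x y : G 1) : moore x -> moore y -> classC x = classC y -> f x = f y.
Proof.
move=> Nx Ny /(abelianization_eq cabP fMcr_additive).
by rewrite /fMcr !(qlift_quotientZ (subgroupT M) qcrP fM_additive fM_peiffer) ?fM_q1.
Qed.

End Descent.

Definition classC_sec (c : C) : G 1 := s2val (cid2 (classC_surj c)).

Lemma classC_secN (c : C) : moore (classC_sec c).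
Proof. by rewrite /classC_sec; case: cid2. Qed.

Lemma classC_secK (c : C) : classC (classC_sec c) = c.
Proof. by rewrite /classC_sec; case: cid2. Qed.

Local Notation A := (abelian_subgroup (gen_by_subgroup _) omegaL_span_commute).

Definition omegaA (x y : G 1) : A := to_sub _ _ (omegaL x y).

Lemma omegaA_val (x y : G 1) : moore x -> moore y -> sval (omegaA x y) = omegaL x y.
Proof. by move=> Nx Ny; rewrite /omegaA to_subK //; apply: omegaL_span_omegaL. Qed.

Lemma omegaAMl (y x x' : G 1) : moore y -> moore x -> moore x' ->
  omegaA (x * x') y = (omegaA x y + omegaA x' y)%R.
Proof.
move=> Ny Nx Nx'; apply: sub_val_inj.
by rewrite sub_valD !omegaA_val ?omegaLMl //; moore_auto.
Qed.

Lemma omegaAMr (x y y' : G 1) : moore x -> moore y -> moore y' ->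
  omegaA x (y * y') = (omegaA x y + omegaA x y')%R.
Proof.
move=> Nx Ny Ny'; apply: sub_val_inj.
by rewrite sub_valD !omegaA_val ?omegaLMr //; moore_auto.
Qed.

Lemma omegaA_peiffer1l (w x y : G 1) : moore w -> moore x -> moore y ->
  omegaA (peiffer1 x y) w = 0%R.
Proof.
move=> Nw Nx Ny; apply: sub_val_inj.
by rewrite sub_val0 omegaA_val ?omegaL_peiffer1l //; moore_auto.
Qed.

Lemma omegaA_peiffer1r (w x y : G 1) : moore w -> moore x -> moore y ->
  omegaA w (peiffer1 x y) = 0%R.
Proof.
move=> Nw Nx Ny; apply: sub_val_inj.
by rewrite sub_val0 omegaA_val ?omegaL_peiffer1r //; moore_auto.
Qed.

Definition omegaC (a b : C) : A := omegaA (classC_sec a) (classC_sec b).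

(* [omegaA] is additive and kills Peiffer commutators in each variable separately, so
   it only depends on the classes in [C] of its arguments. *)
Lemma omegaC_classC (x y : G 1) : moore x -> moore y ->
  omegaC (classC x) (classC y) = omegaA x y.
Proof.
move=> Nx Ny; have Nsx := classC_secN (classC x); have Nsy := classC_secN (classC y).
rewrite /omegaC (classC_eq (f := omegaA^~ _) _ _ Nsx Nx) ?classC_secK //.
- apply: (classC_eq (f := omegaA x)); rewrite ?classC_secK // => *.
    exact: omegaAMr.
  exact: omegaA_peiffer1r.
- by move=> *; apply: omegaAMl.
- by move=> *; apply: omegaA_peiffer1l.
Qed.

Lemma omegaC_biadditive : biadditive omegaC.
Proof.
split=> [a a' b|a b b'].
- have [x Nx <-] := classC_surj a; have [x' Nx' <-] := classC_surj a'.
  have [y Ny <-] := classC_surj b.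
  by rewrite -classCM // !omegaC_classC ?omegaAMl //; moore_auto.
- have [x Nx <-] := classC_surj a; have [y Ny <-] := classC_surj b.
  have [y' Ny' <-] := classC_surj b'.
  by rewrite -classCM // !omegaC_classC ?omegaAMr //; moore_auto.
Qed.

Definition actC (n : G 0) (c : C) : C := classC (act1 n (classC_sec c)).

Lemma actC_classC n (x : G 1) : moore x -> actC n (classC x) = classC (act1 n x).
Proof.
move=> Nx; apply: (classC_eq (f := fun y => classC (act1 n y))); rewrite ?classC_secK //.
- by move=> y y' Ny Ny'; rewrite act1M classCM //; apply: act1_moore.
- by move=> y y' Ny Ny'; rewrite act1_peiffer1 classC_peiffer1 //; apply: act1_moore.
- exact: classC_secN.
Qed.

Lemma actC_additive n : additive_map (actC n).
Proof.
move=> a b; have [x Nx <-] := classC_surj a; have [y Ny <-] := classC_surj b.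
rewrite -classCM // !actC_classC ?act1M; try moore_auto.
by rewrite (classCM (act1_moore n Nx) (act1_moore n Ny)).
Qed.

Section TensorSquare.
Variables (T : zmodType) (t : C -> C -> T).
Hypothesis tP : is_tensor_square t.

Lemma tensor_ext (X : zmodType) (g g' : T -> X) : additive_map g -> additive_map g' ->
  (forall x y, moore x -> moore y -> g (t (classC x) (classC y)) = g' (t (classC x) (classC y))) ->
  forall u, g u = g' u.
Proof.
move=> g_add g'_add gg' u; case: tP => [[tDl tDr] tU].
have gt_bi : biadditive (fun a b => g (t a b)).
  by split=> [a a' b|a b b']; rewrite ?tDl ?tDr g_add.
have [h [_ _ h_uniq]] := tU X _ gt_bi.
rewrite (h_uniq g) // (h_uniq g') // => a b.
by have [x Nx <-] := classC_surj a; have [y Ny <-] := classC_surj b; rewrite gg'.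
Qed.
Let omegaTA_spec := cid ((proj2 tP) A omegaC omegaC_biadditive).

Definition omegaTA : T -> A := sval omegaTA_spec.

Lemma omegaTA_additive : additive_map omegaTA.
Proof. by rewrite /omegaTA; case: omegaTA_spec => /= f []. Qed.

Lemma omegaTA_classC (x y : G 1) : moore x -> moore y ->
  omegaTA (t (classC x) (classC y)) = omegaA x y.
Proof.
by move=> Nx Ny; rewrite /omegaTA; case: omegaTA_spec => /= f [_ -> _]; apply: omegaC_classC.
Qed.

Definition omegaT (u : T) : L := sval (omegaTA u).

Lemma omegaT_additive (u v : T) : omegaT (u + v)%R = omegaT u * omegaT v.
Proof. by rewrite /omegaT omegaTA_additive. Qed.

Lemma omegaT_classC (x y : G 1) : moore x -> moore y ->
  omegaT (t (classC x) (classC y)) = omegaL x y.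
Proof. by move=> Nx Ny; rewrite /omegaT omegaTA_classC ?omegaA_val. Qed.

Lemma actC_tensor_biadditive n : biadditive (fun a b => t (actC n a) (actC n b)).
Proof. by case: tP => [[tDl tDr] _]; split=> *; rewrite actC_additive ?tDl ?tDr. Qed.

Let actT_spec n := cid ((proj2 tP) T _ (actC_tensor_biadditive n)).

Definition actT (n : G 0) : T -> T := sval (actT_spec n).

Lemma actT_additive n : additive_map (actT n).
Proof. by rewrite /actT; case: actT_spec => /= f []. Qed.

Lemma actT_t n (a b : C) : actT n (t a b) = t (actC n a) (actC n b).
Proof. by rewrite /actT; case: actT_spec => /= f [_ -> _]. Qed.

Lemma actT_action : is_zmod_action actT.
Proof.
split=> [|n n'|n]; last exact: actT_additive.
- apply: (tensor_ext (g' := id)) => // [|x y Nx Ny]; first exact: actT_additive.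
  by rewrite actT_t !actC_classC ?act1_1.
- apply: (tensor_ext (g' := actT n \o actT n')) => [|u v|x y Nx Ny] /=; first exact: actT_additive.
    by rewrite !actT_additive.
  by rewrite !actT_t !actC_classC ?act1_comp //; apply: act1_moore.
Qed.

Lemma actT_classM n (m m' : M) :
  actT n (t (cab (qcr m)) (cab (qcr m'))) = t (cab (qcr (actM n m))) (cab (qcr (actM n m'))).
Proof.
have [x Nx <-] := quotient_surj q1P m; have [y Ny <-] := quotient_surj q1P m'.
by rewrite !actM_q1 // actT_t -!/(classC _) !actC_classC.
Qed.

Definition actA (n : G 0) (a : A) : A := to_sub _ _ (actL n (sval a)).

Lemma actA_val n (a : A) : sval (actA n a) = actL n (sval a).
Proof. by rewrite /actA to_subK //; apply: omegaL_span_actL; case: a. Qed.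

Lemma omegaT_actT n (u : T) : omegaT (actT n u) = actL n (omegaT u).
Proof.
rewrite /omegaT -actA_val; congr sval; move: u.
apply: (tensor_ext (g := omegaTA \o actT n) (g' := actA n \o omegaTA)) => [u v|u v|x y Nx Ny] /=.
- by rewrite actT_additive omegaTA_additive.
- by apply: sub_val_inj; rewrite omegaTA_additive sub_valD !actA_val sub_valD actL_morph.
apply: sub_val_inj; rewrite actT_t !actC_classC // !omegaTA_classC ?actA_val ?omegaA_val;
  try moore_auto.
by rewrite /omegaL actL_toL ?act2_omega //; apply: omega_moore.
Qed.

Lemma quadratic_module_simplicial : quadratic_module actM actL qcr cab t omegaT delL dM.
Proof.
split.
  split; [exact: nil2_module_dM | exact: qcrP | exact: cabP | exact: tP |].
  exists (fun u => delL (omegaT u)); split=> // [u v|m m'].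
    by rewrite omegaT_additive delL_morph.
  have [x Nx <-] := quotient_surj q1P m; have [y Ny <-] := quotient_surj q1P m'.
  rewrite -!/(classC _) omegaT_classC // peiffer_q1 // delL_toL ?face_omega //.
  exact: omega_moore.
split; [exact: dM_delL | exact: omegaT_additive | exact: delL_morph | |].
  split; [exact: actL_action | exact: delL_actL | | move=> a m].
    by exists actT; split; [exact: actT_action | exact: actT_classM | exact: omegaT_actT].
  have [x Nx <-] := quotient_surj q1P m; have [l Nl <-] := toL_surj a.
  rewrite dM_q1 // actL_toL // delL_toL // -!/(classC _) omegaT_additive.
  by rewrite !omegaT_classC ?toL_act2_del1 //; apply: face2_moore.
move=> a b; have [l Nl <-] := toL_surj a; have [l' Nl' <-] := toL_surj b.
by rewrite !delL_toL // -!/(classC _) omegaT_classC ?omegaL_face2 //; apply: face2_moore.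
Qed.

End TensorSquare.
End Abelianization.
End Quotients.

Theorem proposition6p3 (S : simplicial_group)
  (HD3 : forall x : SG S 3, D3 x)
  (M : groupType) (q1 : SG S 1 -> M)
  (Hq1 : is_quotient_map (@moore S 1) (P3 (S:=S)) q1)
  (Q : groupType) (q : SG S 2 -> Q)
  (Hq : is_quotient_map (@moore S 2) (bd3 (S:=S)) q)
  (L : groupType) (q2 : Q -> L)
  (Hq2 : is_quotient_map (fun _ => True) (P3' q) q2) :
  exists (d : M -> SG S 0) (del : L -> M)
         (actM : SG S 0 -> M -> M) (actL : SG S 0 -> L -> L),
    [/\ (forall x, moore x -> d (q1 x) = face S 0 1 x),
        (forall x, moore x -> del (q2 (q x)) = q1 (face S 1 2 x)),
        (forall n y, moore y -> actM n (q1 y) = q1 (act1 n y)),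
        (forall n y, moore y -> actL n (q2 (q y)) = q2 (q (act2 n y))) &
    forall (Mcr : groupType) (qcr : M -> Mcr) (C : zmodType) (cab : Mcr -> C)
           (T : zmodType) (t : C -> C -> T),
      is_quotient_map (fun _ => True) (peiffer_subgroup actM d) qcr ->
      is_abelianization cab ->
      is_tensor_square t ->
      exists om : T -> L,
        (forall x y, moore x -> moore y ->
           om (t (cab (qcr (q1 x))) (cab (qcr (q1 y)))) = q2 (q (omega x y))) /\
        quadratic_module actM actL qcr cab t om del d].
Proof.
exists (dM Hq1), (delL q1 Hq Hq2), (actM Hq1), (actL Hq Hq2).
split=> [x|z|n y|n z|Mcr qcr C cab T t qcrP cabP tP]; first exact: dM_q1.
- exact: delL_toL.
- exact: actM_q1.
- exact: actL_toL.
exists (omegaT Hq Hq2 qcrP cabP tP); split; first exact: omegaT_classC.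
exact: quadratic_module_simplicial.
Qed.
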